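(* (i) For every state $s\in S$ there is exactly one finite sequence of feasible transitions $s_0\xrightarrow{\alpha_1\cdots\alpha_k}s$ with all actions $\alpha_i\in\{D,I,N_=,d_-,b_+\}$ (i.e. never using $N_<$) which visits $s_0$ only at its start. (ii) For every state $s\in S$ there is exactly one finite sequence of feasible transitions from $s$ to $s_0$ that never uses the action $I$ and visits $s_0$ only at its end. In particular the BDM Markov chain is irreducible.
   Context: Fix integers $M\ge 1$ and $q\ge 2$. The augmented state set is $\overline S=\{(b_1,\dots,b_M,d;T,t): b_m,d,T\in\mathbb Z,\ 1\le t\le M+1,\ d+T+\sum_{m=1}^M b_m=0\}$, and the BDM state set is $S=\{s\in\overline S: 0\le T\le M\}$, with initial state $s_0=(0,\dots,0,0;0,M+1)$. The feasible transitions (actions) from $s=(b_1,\dots,b_M,d;T,t)\in S$ are: (a) if $t\le M$ and $b_t>d$: action $D$ (probability $(q-1)/q$) to $(b_1,\dots,b_{t-1},d,b_{t+1},\dots,b_M,b_t;T,t+1)$ (swap of $b_t$ and $d$), and action $I$ (probability $1/q$) to $(b_1,\dots,b_M,d;T,t+1)$; (b) if $t\le M$ and $b_t=d$: action $N_=$ (probability 1) to $(b_1,\dots,b_M,d;T,t+1)$; (c) if $t\le M$ and $b_t<d$: action $N_<$ (probability 1) to $(b_1,\dots,b_M,d;T,t+1)$; (d) if $t=M+1$, $T<M$: action $d_-$ (probability 1) to $(b_1,\dots,b_M,d-1;T+1,1)$; (e) if $t=M+1$, $T=M$: action $b_+$ (probability 1) to $(b_1+1,\dots,b_M+1,d;0,1)$.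 *)

From mathcomp Require Import all_boot all_order all_algebra.
From Stdlib Require List.
Set Implicit Arguments. Unset Strict Implicit. Unset Printing Implicit Defensive.
Import Order.TTheory GRing.Theory Num.Theory.
Local Open Scope ring_scope.

(* A state (b_1,...,b_M, d; T, t) of the augmented state set.
   bs = [:: b_1; ...; b_M] (so b_m = nth 0 bs (m-1)), dd = d, TT = T, tt = t. *)
Record state := mkState { bs : seq int; dd : int; TT : int; tt : nat }.

Definition in_Sbar (M : nat) (s : state) : Prop :=
  size (bs s) = M /\ (1 <= tt s <= M.+1)%N /\
  dd s + TT s + \sum_(x <- bs s) x = 0.

Definition in_S (M : nat) (s : state) : Prop :=
  in_Sbar M s /\ 0 <= TT s /\ TT s <= (M%:Z).

Definition s0 (M : nat) : state := mkState (nseq M 0) 0 0 M.+1.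

Inductive action := aD | aI | aNeq | aNlt | adminus | abplus.

Definition bt (s : state) : int := nth 0 (bs s) (tt s).-1.

Definition step (M : nat) (s : state) (a : action) (s' : state) : Prop :=
  in_S M s /\
  match a with
  | aD => (tt s <= M)%N /\ bt s > dd s /\
          s' = mkState (set_nth 0 (bs s) (tt s).-1 (dd s)) (bt s) (TT s) (tt s).+1
  | aI => (tt s <= M)%N /\ bt s > dd s /\
          s' = mkState (bs s) (dd s) (TT s) (tt s).+1
  | aNeq => (tt s <= M)%N /\ bt s = dd s /\
          s' = mkState (bs s) (dd s) (TT s) (tt s).+1
  | aNlt => (tt s <= M)%N /\ bt s < dd s /\
          s' = mkState (bs s) (dd s) (TT s) (tt s).+1
  | adminus => tt s = M.+1 /\ TT s < M%:Z /\
          s' = mkState (bs s) (dd s - 1) (TT s + 1) 1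
  | abplus => tt s = M.+1 /\ TT s = M%:Z /\
          s' = mkState (map (fun x => x + 1) (bs s)) (dd s) 0 1
  end.

Definition prob (q : nat) (a : action) : rat :=
  match a with
  | aD => (q%:R - 1) / q%:R
  | aI => 1 / q%:R
  | _ => 1
  end.

(* p = [:: (a_1, s_1); ...; (a_k, s_k)] is a sequence of feasible transitions
   s --a_1--> s_1 --a_2--> ... --a_k--> s_k *)
Fixpoint tpath (M : nat) (s : state) (p : seq (action * state)) : Prop :=
  match p with
  | [::] => True
  | (a, s') :: p' => step M s a s' /\ tpath M s' p'
  end.

Definition endpoint (s : state) (p : seq (action * state)) : state :=
  last s (map snd p).

Definition actions (p : seq (action * state)) : seq action := map fst p.

From mathcomp Require Import all_boot all_order all_algebra.
From HB Require Import structures.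
From mathcomp Require Import zify ring lra.
From Stdlib Require List.
Import Order.TTheory GRing.Theory Num.Theory.
Local Open Scope ring_scope.

(* Forbidding I makes the chain deterministic forward: from every state exactly one
   transition other than I is feasible ([next_state]).  Forbidding N< makes it
   deterministic backward: every state is entered through exactly one transition other
   than N< ([prev_state]).  This gives the uniqueness in (i) and (ii); existence means
   that iterating either map from any state hits s0.
   Forward, after one sweep of t the register d dominates b_1..b_M.  If m is a lower
   bound for d and all b_k, the rank (M+1)(-T-(M+1)m) + (M+1-t) drops by one at every
   step (b_+ raises m by one) and is nonnegative by the conservation law
   d + T + b_1 + ... + b_M = 0.  The bound survives d_- because d = m would force all
   entries to be equal, which the conservation law only allows at s0.  Backward the
   argument is symmetric, with an upper bound, except on the states (0,...,0,0;0,t),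
   t <= M, which precede s0 on its cycle; they are reached by stepping back through
   them to (-1,...,-1,0;M,M+1). *)

Lemma rank_descent (T : Type) (P : T -> int -> Prop) (R : T -> Prop)
    (rank : T -> int -> int) :
  (forall x m, P x m -> 0 <= rank x m) ->
  (forall x m, P x m ->
     R x \/ exists y m', [/\ P y m', rank y m' < rank x m & (R y -> R x)]) ->
  forall x m, P x m -> R x.
Proof.
move=> rank_ge0 descend x m Pxm.
have [n] : exists n : nat, rank x m < n%:Z by exists `|rank x m|.+1; lia.
elim: n x m Pxm => [|n IH] x m Pxm rank_lt; first by have := rank_ge0 x m Pxm; lia.
have [//|[y [m' [Pym' rank_y Ry_Rx]]]] := descend x m Pxm.
by apply/Ry_Rx/(IH y m') => //; lia.
Qed.

Lemma set_nth_nth (T : Type) (x0 : T) (s : seq T) n :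
  (n < size s)%N -> set_nth x0 s n (nth x0 s n) = s.
Proof. by elim: s n => [|x s IH] [|n] //= n_lt; rewrite IH. Qed.

Lemma mem_set_nth_lt (T : eqType) (x0 : T) (s : seq T) n x y : (n < size s)%N ->
  x \in set_nth x0 s n y -> x = y \/ x \in s.
Proof.
move=> n_lt /(nthP x0)[i]; rewrite size_set_nth (maxn_idPr n_lt) nth_set_nth /=.
by case: eqP => [_ _ <-|_ i_lt <-]; [left | right; apply: mem_nth].
Qed.

Section IntSeq.
Implicit Types (s : seq int) (c m x y : int).

Lemma sum_set_nth s n y : (n < size s)%N ->
  \sum_(x <- set_nth 0 s n y) x = y - nth 0 s n + \sum_(x <- s) x.
Proof.
elim: s n => [|x s IH] [|n] //= n_lt; rewrite !big_cons ?IH //; ring.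
Qed.

Lemma sum_map_addr s c :
  \sum_(x <- map (fun x => x + c) s) x = (size s)%:Z * c + \sum_(x <- s) x.
Proof.
elim: s => [|x s IH] /=; first by rewrite big_nil mul0r addr0.
rewrite !big_cons IH -addn1 PoszD; ring.
Qed.

Lemma sum_ge_size_mul s m : {in s, forall x, m <= x} ->
  (size s)%:Z * m <= \sum_(x <- s) x.
Proof.
elim: s => [|x s IH] /= lb_s; first by rewrite big_nil mul0r.
rewrite big_cons -addn1 PoszD mulrDl mul1r addrC lerD ?lb_s ?mem_head //.
by apply: IH => y s_y; rewrite lb_s // inE s_y orbT.
Qed.

Lemma sum_le_size_mul s m : {in s, forall x, x <= m} ->
  \sum_(x <- s) x <= (size s)%:Z * m.
Proof.
move=> ub_s; rewrite -lerN2 -mulrN -sumrN.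
have -> : \sum_(x <- s) - x = \sum_(x <- map -%R s) x by rewrite big_map.
rewrite -(size_map -%R); apply: sum_ge_size_mul => _ /mapP[x s_x ->].
by rewrite lerN2 ub_s.
Qed.

Lemma sum_nseq n c : \sum_(x <- nseq n c) x = n%:Z * c.
Proof. by rewrite big_nseq iter_addr_0 -mulr_natl natz. Qed.

Lemma seq_bounded s : exists m, {in s, forall x, - m <= x /\ x <= m}.
Proof.
elim: s => [|x s [m bnd]]; first by exists 0.
by exists (`|x| + `|m|) => y; rewrite inE => /predU1P[->|/bnd]; lia.
Qed.

End IntSeq.

Definition state_tuple (s : state) := (bs s, dd s, TT s, tt s).
Definition tuple_state (x : seq int * int * int * nat) :=
  mkState x.1.1.1 x.1.1.2 x.1.2 x.2.
Lemma state_tupleK : cancel state_tuple tuple_state. Proof. by case. Qed.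
HB.instance Definition _ := Equality.copy state (can_type state_tupleK).

Lemma Forall_rcons (T : Type) (P : T -> Prop) l x :
  List.Forall P (rcons l x) <-> List.Forall P l /\ P x.
Proof.
elim: l => [|y l IH] /=; rewrite ?List.Forall_cons_iff; last by rewrite IH; tauto.
by split=> [[]|[]]; split.
Qed.

Section Paths.
Variable M : nat.
Implicit Types (s y : state) (p : seq (action * state)).

Lemma tpath_cat s p1 p2 :
  tpath M s (p1 ++ p2) <-> tpath M s p1 /\ tpath M (endpoint s p1) p2.
Proof.
elim: p1 s => [|[a y] p1 IH] s /=; first by tauto.
by rewrite IH; tauto.
Qed.

Lemma endpoint_cat s p1 p2 : endpoint s (p1 ++ p2) = endpoint (endpoint s p1) p2.
Proof. by rewrite /endpoint map_cat last_cat. Qed.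

Lemma tpath_rcons s p a y :
  tpath M s (rcons p (a, y)) <-> tpath M s p /\ step M (endpoint s p) a y.
Proof. by rewrite -cats1 tpath_cat /=; tauto. Qed.

Lemma endpoint_rcons s p a y : endpoint s (rcons p (a, y)) = y.
Proof. by rewrite /endpoint map_rcons last_rcons. Qed.

End Paths.

Definition zero_state (M t : nat) : state := mkState (nseq M 0) 0 0 t.

Section BDM.
Variable M : nat.
Implicit Types (s y : state) (a : action) (m : int).

Lemma in_S_mkState B d T t : in_S M (mkState B d T t) <->
  [/\ size B = M, (1 <= t <= M.+1)%N, d + T + \sum_(x <- B) x = 0, 0 <= T & T <= M%:Z].
Proof. by split=> [[[? [? ?]] [? ?]]|[]]. Qed.

Lemma in_S_inv {s} : in_S M s -> [/\ size (bs s) = M, (1 <= tt s <= M.+1)%N,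
  dd s + TT s + \sum_(x <- bs s) x = 0, 0 <= TT s & TT s <= M%:Z].
Proof. by case: s => B d T t /in_S_mkState. Qed.

Lemma in_S_zero_state t : (1 <= t <= M.+1)%N -> in_S M (zero_state M t).
Proof. by move=> t_bd; apply/in_S_mkState; rewrite size_nseq sum_nseq; split; lia. Qed.

Lemma step_in_S {s a y} : step M s a y -> in_S M y.
Proof.
case: s => B d T t [/in_S_mkState [size_B /andP[t_ge1 t_le] sum0 T_ge0 T_le]].
case: a => /= [] [t_M [cmp ->]]; apply/in_S_mkState;
  rewrite ?size_set_nth ?sum_set_nth ?size_map ?sum_map_addr size_B.
(* lia must see the two copies of b_t as one atom, which [t.-1] inside [nth] prevents *)
all: rewrite -?/(bt (mkState B d T t)); try split; lia.
Qed.

Definition next_state s : state :=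
  if (tt s <= M)%N then
    if dd s < bt s then mkState (set_nth 0 (bs s) (tt s).-1 (dd s)) (bt s) (TT s) (tt s).+1
    else mkState (bs s) (dd s) (TT s) (tt s).+1
  else if TT s < M%:Z then mkState (bs s) (dd s - 1) (TT s + 1) 1
  else mkState (map (fun x => x + 1) (bs s)) (dd s) 0 1.

Definition next_action s : action :=
  if (tt s <= M)%N then
    if dd s < bt s then aD else if bt s == dd s then aNeq else aNlt
  else if TT s < M%:Z then adminus else abplus.

Lemma tt_next_state s : tt (next_state s) = if (tt s <= M)%N then (tt s).+1 else 1%N.
Proof. by rewrite /next_state; repeat case: ifP. Qed.

Lemma next_action_neq_I s : next_action s <> aI.
Proof. by rewrite /next_action; repeat case: ifP. Qed.

Lemma step_next {s} : in_S M s -> step M s (next_action s) (next_state s).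
Proof.
move=> Ss; have [_ /andP[_ t_le] _ _ T_le] := in_S_inv Ss.
split=> //; rewrite /next_action /next_state.
case: leqP => t_M; first by case: ltgtP.
have t_eq : tt s = M.+1 by lia.
by case: ltP => T_M; rewrite t_eq; do !split; lia.
Qed.

Lemma in_S_next s : in_S M s -> in_S M (next_state s).
Proof. by move/step_next/step_in_S. Qed.

Lemma step_next_uniq {s a y} : a <> aI -> step M s a y ->
  y = next_state s /\ a = next_action s.
Proof.
rewrite /next_state /next_action => a_neq [_].
case: a a_neq => // _ [t_M [cmp ->]]; rewrite t_M ?ltnn; try by rewrite cmp.
- by rewrite ltNge le_eqVlt cmp eqxx.
- by rewrite ltNge le_eqVlt cmp orbT /= lt_eqF.
- by rewrite cmp ltxx.
Qed.

Definition prev_state s : state :=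
  if tt s == 1%N then
    if TT s == 0 then mkState (map (fun x => x - 1) (bs s)) (dd s) M%:Z M.+1
    else mkState (bs s) (dd s + 1) (TT s - 1) M.+1
  else if nth 0 (bs s) (tt s).-2 < dd s then
    mkState (set_nth 0 (bs s) (tt s).-2 (dd s)) (nth 0 (bs s) (tt s).-2) (TT s) (tt s).-1
  else mkState (bs s) (dd s) (TT s) (tt s).-1.

Definition prev_action s : action :=
  if tt s == 1%N then (if TT s == 0 then abplus else adminus)
  else if nth 0 (bs s) (tt s).-2 < dd s then aD
  else if dd s < nth 0 (bs s) (tt s).-2 then aI else aNeq.

Lemma tt_prev_state s : tt (prev_state s) = if tt s == 1%N then M.+1 else (tt s).-1.
Proof. by rewrite /prev_state; repeat case: ifP. Qed.

Lemma prev_action_neq_Nlt s : prev_action s <> aNlt.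
Proof. by rewrite /prev_action; repeat case: ifP. Qed.

Lemma in_S_prev {s} : in_S M s -> in_S M (prev_state s).
Proof.
case: s => B d T t /in_S_mkState [size_B /andP[t_ge1 t_le] sum0 T_ge0 T_le].
rewrite /prev_state /=; case: eqP => t_1; first case: eqP => T_0.
all: try case: ifP => _.
all: apply/in_S_mkState; rewrite ?size_set_nth ?sum_set_nth ?size_map ?sum_map_addr size_B.
all: try set b := nth _ _ _; try split; lia.
Qed.

Lemma step_prev {s} : in_S M s -> step M (prev_state s) (prev_action s) s.
Proof.
move=> Ss; split; first exact: in_S_prev.
case: s Ss => B d T t /in_S_mkState [size_B /andP[t_ge1 t_le] _ _ T_le].
rewrite /prev_state /prev_action /=; case: eqP => [->|t_ne1].
  case: eqP => [->|_] /=; last by do !split; [lia | congr mkState; ring].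
  by rewrite -map_comp (eq_map (subrK 1)) map_id.
have t_succ : t.-1.+1 = t by lia.
case: ltgtP => cmp; rewrite /bt /= t_succ.
- rewrite nth_set_nth /= eqxx set_set_nth eqxx set_nth_nth; last by lia.
  by do !split => //; lia.
- by do !split => //; lia.
- by do !split => //; lia.
Qed.

Lemma step_prev_uniq {y a s} : a <> aNlt -> step M y a s ->
  y = prev_state s /\ a = prev_action s.
Proof.
case: y => B d T t a_neq [/in_S_mkState [size_B /andP[t_ge1 t_le] _ T_ge0 _]].
rewrite /prev_state /prev_action /bt.
case: a a_neq => // _ /= [t_M [cmp ->]] /=.
- rewrite nth_set_nth /= eqxx cmp set_set_nth eqxx set_nth_nth; last by lia.
  by have -> : (t.+1 == 1%N) = false by lia.
- have -> : (t.+1 == 1%N) = false by lia.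
  by rewrite ltNge (ltW cmp) cmp.
- have -> : (t.+1 == 1%N) = false by lia.
  by rewrite cmp ltxx.
- have -> : (T + 1 == 0) = false by lia.
  by rewrite t_M; split=> //; congr mkState; ring.
- by rewrite t_M cmp -map_comp (eq_map (addrK 1)) map_id.
Qed.

Definition path_to_s0 s p : Prop :=
  tpath M s p /\ endpoint s p = s0 M /\
  List.Forall (fun a => a <> aI) (actions p) /\
  List.Forall (fun y => y <> s0 M) (belast s (map snd p)).

Definition path_from_s0 s p : Prop :=
  tpath M (s0 M) p /\ endpoint (s0 M) p = s /\
  List.Forall (fun a => a <> aNlt) (actions p) /\
  List.Forall (fun y => y <> s0 M) (map snd p).

Lemma exists_path_to_s0_next s : in_S M s ->
  (exists p, path_to_s0 (next_state s) p) -> exists p, path_to_s0 s p.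
Proof.
move=> Ss [p [path_p [end_p [act_p avoid_p]]]].
have [->|/eqP ne] := eqVneq s (s0 M); first by exists [::].
exists ((next_action s, next_state s) :: p); split; [|split; [|split]] => //=.
- by split=> //; apply: step_next.
- by constructor=> //; apply: next_action_neq_I.
- by constructor.
Qed.

Lemma exists_path_from_s0_prev s : in_S M s ->
  (exists p, path_from_s0 (prev_state s) p) -> exists p, path_from_s0 s p.
Proof.
move=> Ss [p [path_p [end_p [act_p avoid_p]]]].
have [->|/eqP ne] := eqVneq s (s0 M); first by exists [::].
exists (rcons p (prev_action s, s)); split; [|split; [|split]].
- by apply/tpath_rcons; rewrite end_p; split=> //; apply: step_prev.
- exact: endpoint_rcons.
- by rewrite /actions map_rcons; apply/Forall_rcons; split=> //; apply: prev_action_neq_Nlt.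
- by rewrite map_rcons; apply/Forall_rcons.
Qed.

Lemma path_to_s0_uniq s : uniqueness (path_to_s0 s).
Proof.
move=> p1; elim: p1 s => [|[a y] p1 IH] s [|[b z] p2] //.
- by move=> [_ [/= s_s0 _]] [_ [_ [_ /List.Forall_cons_iff[/(_ s_s0)]]]].
- by move=> [_ [_ [_ /List.Forall_cons_iff[s_neq _]]]] [_ [/= /s_neq]].
move=> [[st1 path1] [end1 [act1 av1]]] [[st2 path2] [end2 [act2 av2]]].
move: act1 act2 av1 av2 => /= /List.Forall_cons_iff[a_neq act1].
move=> /List.Forall_cons_iff[b_neq act2] /List.Forall_cons_iff[_ av1] /List.Forall_cons_iff[_ av2].
have [y_eq a_eq] := step_next_uniq a_neq st1.
have [z_eq b_eq] := step_next_uniq b_neq st2; subst.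
by congr cons; apply: (IH (next_state s)).
Qed.

Lemma path_from_s0_uniq s : uniqueness (path_from_s0 s).
Proof.
move=> p1; elim/last_ind: p1 s => [|p1 [a y] IH] s; case/lastP => [|p2 [b z]] //;
  rewrite /path_from_s0 /actions !map_rcons !endpoint_rcons /=.
- by move=> [_ [/= <- _]] [_ [z_s0 [_ /Forall_rcons[_ /(_ z_s0)]]]].
- by move=> [_ [-> [_ /Forall_rcons[_ s_neq]]]] [_ [/= /esym /s_neq]].
move=> [/tpath_rcons[path1 st1] [<- [/Forall_rcons[act1 a_neq] /Forall_rcons[av1 _]]]].
move=> [/tpath_rcons[path2 st2] [y_z [/Forall_rcons[act2 b_neq] /Forall_rcons[av2 _]]]].
have [e1 a_eq] := step_prev_uniq a_neq st1.
have [e2 b_eq] := step_prev_uniq b_neq st2; subst.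
by congr rcons; apply: (IH (prev_state y)).
Qed.

Lemma flat_state_zero s : in_S M s -> {in bs s, forall x, x = dd s} ->
  s = zero_state M (tt s).
Proof.
case: s => B d T t /in_S_mkState [size_B _ sum0 T_ge0 T_le] /= flat.
have B_eq : B = nseq M d.
  by rewrite -size_B; apply/all_pred1P/allP => x /flat ->; rewrite /= eqxx.
rewrite B_eq sum_nseq in sum0.
have d0 : d = 0.
  have : d = 0 \/ 0 < d \/ d < 0 by lia.
  by case=> [//|[]] d_cmp; nia.
have T0 : T = 0 by move: sum0; rewrite d0; lia.
by rewrite /zero_state B_eq d0 T0.
Qed.

Definition lower_bound m s := m <= dd s /\ {in bs s, forall x, m <= x}.
Definition upper_bound m s := dd s <= m /\ {in bs s, forall x, x <= m}.

Lemma exists_bounds s : exists m, lower_bound (- m) s /\ upper_bound m s.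
Proof.
have [m bnd] := seq_bounded (dd s :: bs s); have [d_lo d_hi] := bnd _ (mem_head _ _).
have bnd_bs x : x \in bs s -> - m <= x /\ x <= m by move=> bs_x; apply: bnd; rewrite inE bs_x orbT.
by exists m; split; split=> // x /bnd_bs[].
Qed.

Definition prefix_le_d s := forall i, (i < (tt s).-1)%N -> nth 0 (bs s) i <= dd s.
Definition fwd_rank m s : int :=
  (M.+1)%:Z * (- TT s - (M.+1)%:Z * m) + ((M.+1)%:Z - (tt s)%:Z).

Lemma fwd_rank_ge0 s m : in_S M s -> lower_bound m s -> 0 <= fwd_rank m s.
Proof.
move=> Ss [m_d /sum_ge_size_mul]; have [-> t_bd sum0 _ _] := in_S_inv Ss.
by rewrite /fwd_rank; nia.
Qed.

Lemma lower_bound_lt_d s m : in_S M s -> tt s = M.+1 -> prefix_le_d s ->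
  lower_bound m s -> s <> s0 M -> m < dd s.
Proof.
move=> Ss t_end pre [m_d m_bs] ne; rewrite lt_neqAle m_d andbT.
apply/eqP => m_eq; apply: ne; rewrite -[s0 M]/(zero_state M M.+1) -t_end.
apply: flat_state_zero => // x bs_x; apply/eqP; rewrite eq_le -m_eq m_bs // andbT m_eq.
have [size_B _ _ _ _] := in_S_inv Ss.
by have [i i_lt <-] := nthP 0 bs_x; apply: pre; rewrite t_end -size_B.
Qed.

Lemma next_state_descent s m : in_S M s -> prefix_le_d s -> lower_bound m s ->
  s <> s0 M -> exists m', [/\ prefix_le_d (next_state s),
    lower_bound m' (next_state s) & fwd_rank m' (next_state s) < fwd_rank m s].
Proof.
move=> Ss pre lb ne; have [size_B /andP[t_ge1 t_le] _ _ T_le] := in_S_inv Ss.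
have [m_d m_bs] := lb; rewrite /next_state /fwd_rank.
case: leqP => t_M; last first.
  have t_end : tt s = M.+1 by lia.
  have m_lt_d : m < dd s by apply: lower_bound_lt_d.
  case: ltP => T_M.
    by exists m; split=> //=; [split=> //=; lia | rewrite t_end; lia].
  exists (m + 1); split=> //=; last by rewrite t_end; nia.
  split=> /=; first lia.
  by move=> _ /mapP[x /m_bs bs_x ->]; rewrite lerD2r.
have t_lt : ((tt s).-1 < size (bs s))%N by lia.
exists m; case: ltP => cmp; split=> //=; try lia.
- move=> i /= i_lt; rewrite nth_set_nth /=; case: eqP => [_|i_neq]; first exact: ltW.
  by apply: le_trans (ltW cmp); apply: pre; lia.
- split=> [|x /mem_set_nth_lt[//|->|/m_bs//]]; [exact/m_bs/mem_nth | exact: m_d].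
- move=> i /= i_lt; have [i_eq|i_neq] := eqVneq i (tt s).-1; first by rewrite i_eq.
  by apply: pre; lia.
Qed.

Lemma exists_path_to_s0_of_prefix s : in_S M s -> prefix_le_d s ->
  exists p, path_to_s0 s p.
Proof.
move=> Ss pre; have [m [lb _]] := exists_bounds s.
pose P y m := [/\ in_S M y, prefix_le_d y & lower_bound m y].
apply: (@rank_descent _ P (fun y => exists p, path_to_s0 y p) (fun y m => fwd_rank m y)
  _ _ s (- m)); last by split.
  by move=> y m' [Sy _ lb_y]; apply: fwd_rank_ge0.
move=> y m' [Sy pre_y lb_y]; have [->|/eqP ne] := eqVneq y (s0 M).
  by left; exists [::]; split.
right; have [m'' [pre' lb' rank_lt]] := next_state_descent y m' Sy pre_y lb_y ne.
exists (next_state y), m''; split=> //; last exact: exists_path_to_s0_next.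
by split=> //; apply: in_S_next.
Qed.

Lemma exists_path_to_s0 s : in_S M s -> exists p, path_to_s0 s p.
Proof.
move=> Ss; have [k] : exists k, (M.+1 - tt s)%N = k by eexists.
have [_ /andP[_ t_le] _ _ _] := in_S_inv Ss.
elim: k s Ss t_le => [|k IH] s Ss t_le k_eq; apply: exists_path_to_s0_next => //.
  apply: exists_path_to_s0_of_prefix => [|i]; first exact: in_S_next.
  by rewrite tt_next_state; case: ifP; lia.
by apply: IH; rewrite ?tt_next_state; [exact: in_S_next | case: ifP; lia..].
Qed.

Definition suffix_ge_d s := forall i, ((tt s).-1 <= i < M)%N -> dd s <= nth 0 (bs s) i.
Definition bwd_rank m s : int := (M.+1)%:Z * ((M.+1)%:Z * m + TT s) + ((tt s)%:Z - 1).

Lemma bwd_rank_ge0 s m : in_S M s -> upper_bound m s -> 0 <= bwd_rank m s.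
Proof.
move=> Ss [d_m /sum_le_size_mul]; have [-> t_bd sum0 _ _] := in_S_inv Ss.
by rewrite /bwd_rank; nia.
Qed.

Lemma d_lt_upper_bound s m : in_S M s -> tt s = 1%N -> suffix_ge_d s ->
  upper_bound m s -> s <> zero_state M 1 -> dd s < m.
Proof.
move=> Ss t_1 suf [d_m bs_m] ne; rewrite lt_neqAle d_m andbT.
apply/eqP => d_eq; apply: ne; rewrite -t_1.
apply: flat_state_zero => // x bs_x; apply/eqP; rewrite eq_le d_eq bs_m // -d_eq.
have [size_B _ _ _ _] := in_S_inv Ss.
by have [i i_lt <-] := nthP 0 bs_x; apply: suf; rewrite t_1 -size_B.
Qed.

Lemma prev_state_descent s m : in_S M s -> suffix_ge_d s -> upper_bound m s ->
  s <> zero_state M 1 -> exists m', [/\ suffix_ge_d (prev_state s),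
    upper_bound m' (prev_state s) & bwd_rank m' (prev_state s) < bwd_rank m s].
Proof.
move=> Ss suf ub nz; have [size_B /andP[t_ge1 t_le] _ T_ge0 T_le] := in_S_inv Ss.
have [d_m bs_m] := ub; rewrite /prev_state /bwd_rank.
case: eqP => t_1.
  have d_lt_m : dd s < m by apply: d_lt_upper_bound.
  case: eqP => T_0 /=.
    exists (m - 1); split=> [i /=||]; [lia | split=> //=; first lia | rewrite t_1 T_0; nia].
    by move=> _ /mapP[x /bs_m x_m ->]; lia.
  by exists m; split=> [i /=||]; [lia | split=> //=; lia | rewrite t_1; lia].
have t_lt : ((tt s).-2 < size (bs s))%N by lia.
exists m; case: ltP => cmp; split=> //=; try lia.
- move=> i /= i_bd; rewrite nth_set_nth /=; case: eqP => [_|i_neq]; first exact: ltW.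
  by apply: le_trans (ltW cmp) (suf _ _); lia.
- split=> [|x /mem_set_nth_lt[//|->|/bs_m//]]; [exact/bs_m/mem_nth | exact: d_m].
- move=> i /= i_bd; have [->|i_neq] := eqVneq i (tt s).-2; first exact: cmp.
  by apply: suf; lia.
Qed.

Definition is_zero_state s : bool := (tt s <= M)%N && (s == zero_state M (tt s)).

Lemma step_from_zero_state t a s : step M (zero_state M t) a s -> (t <= M)%N ->
  s = zero_state M t.+1.
Proof.
rewrite /step /bt /= nth_nseq if_same => -[_] + t_le.
case: a => /= [[_ [lt _]]|[_ [lt _]]|[_ [_ ->]]|[_ [lt _]]|[t_M _]|[t_M _]] //.
all: by [rewrite ltxx in lt | lia].
Qed.

Lemma prev_state_not_zero s : in_S M s -> s <> s0 M -> ~~ is_zero_state s ->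
  ~~ is_zero_state (prev_state s).
Proof.
move=> Ss ne nz; apply/negP => /andP[]; set t := tt _ => t_le /eqP prev_eq.
have := step_prev Ss; rewrite prev_eq => /step_from_zero_state/(_ t_le) s_eq.
move: nz; rewrite s_eq /is_zero_state eqxx andbT /= -ltnNge ltnS => M_le.
by apply: ne; rewrite s_eq (_ : t = M) //; lia.
Qed.

Section PositiveM.
Hypothesis M_gt0 : (0 < M)%N.

Lemma exists_path_from_s0_of_suffix s : in_S M s -> suffix_ge_d s ->
  ~~ is_zero_state s -> exists p, path_from_s0 s p.
Proof.
move=> Ss suf nz; have [m [_ ub]] := exists_bounds s.
pose P y m := [/\ in_S M y, suffix_ge_d y, upper_bound m y & ~~ is_zero_state y].
apply: (@rank_descent _ P (fun y => exists p, path_from_s0 y p) (fun y m => bwd_rank m y)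
  _ _ s m); last by split.
  by move=> y m' [Sy _ ub_y _]; apply: bwd_rank_ge0.
move=> y m' [Sy suf_y ub_y nz_y]; have [->|/eqP ne] := eqVneq y (s0 M).
  by left; exists [::]; split.
have ne1 : y <> zero_state M 1.
  by move=> y_eq; move: nz_y; rewrite y_eq /is_zero_state eqxx M_gt0.
right; have [m'' [suf' ub' rank_lt]] := prev_state_descent y m' Sy suf_y ub_y ne1.
exists (prev_state y), m''; split=> //; last exact: exists_path_from_s0_prev.
by split=> //; [apply: in_S_prev | apply: prev_state_not_zero].
Qed.

Lemma exists_path_from_s0_nonzero s : in_S M s -> ~~ is_zero_state s ->
  exists p, path_from_s0 s p.
Proof.
move=> Ss; have [_ /andP[t_ge1 _] _ _ _] := in_S_inv Ss.
have [n t_eq] : exists n, tt s = n.+1 by exists (tt s).-1; lia.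
elim: n s Ss t_eq {t_ge1} => [|n IH] s Ss t_eq nz.
all: have [->|/eqP ne] := eqVneq s (s0 M); first by exists [::].
all: apply: exists_path_from_s0_prev => //; have nz' := prev_state_not_zero s Ss ne nz.
  apply: exists_path_from_s0_of_suffix => // [|i]; first exact: in_S_prev.
  by rewrite tt_prev_state t_eq /=; lia.
by apply: IH => //; [exact: in_S_prev | rewrite tt_prev_state t_eq].
Qed.

Lemma exists_path_from_s0_zero_state t : (0 < t <= M)%N ->
  exists p, path_from_s0 (zero_state M t) p.
Proof.
elim: t => [//|t IH] t_bd; apply: exists_path_from_s0_prev.
  by apply: in_S_zero_state; lia.
case: t IH t_bd => [_ _|t IH t_bd].
  apply: exists_path_from_s0_nonzero; last by rewrite /is_zero_state /= ltnn.
  by apply: in_S_prev; apply: in_S_zero_state.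
by rewrite /prev_state /= nth_nseq if_same ltxx; apply: IH; lia.
Qed.

Lemma exists_path_from_s0 s : in_S M s -> exists p, path_from_s0 s p.
Proof.
move=> Ss; have [/andP[t_le /eqP ->]|nz] := boolP (is_zero_state s).
  by apply: exists_path_from_s0_zero_state; have [_ /andP[]] := in_S_inv Ss; lia.
exact: exists_path_from_s0_nonzero.
Qed.

End PositiveM.

End BDM.

Lemma prob_gt0 q a : (1 < q)%N -> 0 < prob q a.
Proof.
move=> q_gt1; have q_gt0 : 0 < q%:R :> rat by rewrite ltr0n; lia.
by case: a => //=; apply: divr_gt0; rewrite ?subr_gt0 ?ltr1n.
Qed.

Theorem theorem10 (M q : nat) (hM : (1 <= M)%N) (hq : (2 <= q)%N) :
  (forall s, in_S M s ->
     exists! p : seq (action * state),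
       tpath M (s0 M) p /\ endpoint (s0 M) p = s /\
       List.Forall (fun a => a <> aNlt) (actions p) /\
       List.Forall (fun x => x <> s0 M) (map snd p)) /\
  (forall s, in_S M s ->
     exists! p : seq (action * state),
       tpath M s p /\ endpoint s p = s0 M /\
       List.Forall (fun a => a <> aI) (actions p) /\
       List.Forall (fun x => x <> s0 M) (belast s (map snd p))) /\
  (forall s s', in_S M s -> in_S M s' ->
     exists p : seq (action * state),
       tpath M s p /\ endpoint s p = s' /\
       List.Forall (fun a => 0 < prob q a) (actions p)).
Proof.
split; [|split].
- move=> s Ss; apply/unique_existence.
  by split; [apply: exists_path_from_s0 | apply: path_from_s0_uniq].
- move=> s Ss; apply/unique_existence.
  by split; [apply: exists_path_to_s0 | apply: path_to_s0_uniq].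
move=> s s' Ss Ss'.
have [p1 [path1 [end1 _]]] := exists_path_to_s0 M s Ss.
have [p2 [path2 [end2 _]]] := exists_path_from_s0 M hM s' Ss'.
exists (p1 ++ p2); split; first by apply/tpath_cat; rewrite end1.
split; first by rewrite endpoint_cat end1.
by apply/List.Forall_forall => a _; apply: prob_gt0.
Qed.
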